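(* The eventual equality relation $E_0$ on $2^\mathbb{N}$ is $\Delta^0_2$-graphable with diameter $2$.
   Context: $xE_0y$ iff there is $m$ with $x(n)=y(n)$ for all $n\ge m$. $E$ is $\Gamma$-graphable with diameter $k$ if there is a simple undirected graph $G$ in $\Gamma$ whose connectedness relation equals $E$ and $k$ is the least integer such that any two $G$-connected points are joined by a path of length at most $k$. *)

(* Cantor space 2^N as nat -> bool, with the product topology
   written out concretely via basic clopen cylinders. *)
From Stdlib Require Import Arith.

Definition cantor := nat -> bool.

Definition E0 (x y : cantor) : Prop :=
  exists m, forall n, m <= n -> x n = y n.

Definition rel2 := cantor -> cantor -> Prop.

Definition open2 (U : rel2) : Prop :=
  forall x y, U x y -> exists m, forall x' y',
    (forall n, n < m -> x' n = x n /\ y' n = y n) -> U x' y'.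

Definition closed2 (F : rel2) : Prop := open2 (fun x y => ~ F x y).

Definition Sigma02 (A : rel2) : Prop :=
  exists F : nat -> rel2, (forall i, closed2 (F i)) /\
    (forall x y, A x y <-> exists i, F i x y).

Definition Pi02 (A : rel2) : Prop := Sigma02 (fun x y => ~ A x y).

Definition Delta02 (A : rel2) : Prop := Sigma02 A /\ Pi02 A.

Definition simple_graph (G : rel2) : Prop :=
  (forall x, ~ G x x) /\ (forall x y, G x y -> G y x).

Fixpoint walk (G : rel2) (k : nat) (x y : cantor) : Prop :=
  match k with
  | 0 => x = y
  | S k' => exists z, G x z /\ walk G k' z y
  end.

Definition connected (G : rel2) (x y : cantor) : Prop := exists k, walk G k x y.

Definition diam_bound (G : rel2) (k : nat) : Prop :=
  forall x y, connected G x y -> exists j, j <= k /\ walk G j x y.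

Definition has_diameter (G : rel2) (k : nat) : Prop :=
  diam_bound G k /\ (forall k', diam_bound G k' -> k <= k').

Definition Delta02_graphable_diam (E : rel2) (k : nat) : Prop :=
  exists G : rel2, simple_graph G /\ Delta02 G /\
    (forall x y, connected G x y <-> E x y) /\ has_diameter G k.

(* Join x and y when they have a first "double difference" (differences at two
   consecutive coordinates t, t+1) and agree beyond t+1.  Both this graph and
   its complement are countable unions of closed sets: a non-edge either has no
   double difference at all, or shows a difference after its first one, which
   is witnessed at a finite stage.  If x and y agree from m on, the point z that
   follows y at even and x at odd coordinates, and disagrees with both at m+1
   and m+2, is adjacent to both: below m+1 its differences from x (resp. y) are
   isolated.  The E_0-equivalent points 0^oo and 10^oo are neither equal nor
   adjacent, so the diameter is exactly 2. *)
From Stdlib Require Import Arith Bool Lia Classical RelationClasses.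

Lemma has_diameter_intro (G : rel2) (k : nat) (x y : cantor) :
  diam_bound G k -> connected G x y -> (forall j, j < k -> ~ walk G j x y) ->
  has_diameter G k.
Proof.
  intros Hbound Hxy Hshort. split; [exact Hbound |].
  intros k' Hbound'. destruct (Hbound' x y Hxy) as [j [Hj Hwalk]].
  destruct (Nat.le_gt_cases k k') as [Hle | Hlt]; [exact Hle |].
  exfalso. apply (Hshort j); [lia | exact Hwalk].
Qed.

Section EquivalenceGraph.

Variables (G E : rel2).
Hypotheses (E_refl : Reflexive E) (E_trans : Transitive E).
Hypothesis G_sub_E : forall x y, G x y -> E x y.
Hypothesis E_walk2 : forall x y, E x y -> walk G 2 x y.

Lemma walk_sub_equiv k x y : walk G k x y -> E x y.
Proof.
  revert x. induction k as [|k IH]; simpl; intros x Hwalk.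
  - subst. reflexivity.
  - destruct Hwalk as [z [Hxz Hzy]].
    transitivity z; [apply G_sub_E | apply IH]; assumption.
Qed.

Lemma connected_iff_equiv x y : connected G x y <-> E x y.
Proof.
  split.
  - intros [k Hwalk]. exact (walk_sub_equiv k x y Hwalk).
  - intros Hxy. exists 2. exact (E_walk2 x y Hxy).
Qed.

Lemma diam_bound_equiv : diam_bound G 2.
Proof.
  intros x y Hxy. exists 2. split; [reflexivity |].
  apply E_walk2, connected_iff_equiv, Hxy.
Qed.

End EquivalenceGraph.

Definition depends_below (m : nat) (R : rel2) : Prop :=
  forall x y x' y', (forall n, n < m -> x' n = x n /\ y' n = y n) ->
    R x y -> R x' y'.

Lemma depends_below_closed m R : depends_below m R -> closed2 R.
Proof.
  intros HR x y Hxy. exists m. intros x' y' Hagree HR'. apply Hxy.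
  apply (HR x' y'); [| exact HR'].
  intros n Hn. destruct (Hagree n Hn). split; symmetry; assumption.
Qed.

Lemma closed2_forall {I : Type} (F : I -> rel2) :
  (forall i, closed2 (F i)) -> closed2 (fun x y => forall i, F i x y).
Proof.
  intros HF x y Hxy.
  destruct (not_all_ex_not _ _ Hxy) as [i Hi].
  destruct (HF i x y Hi) as [m Hm]. exists m.
  intros x' y' Hagree Hall. exact (Hm x' y' Hagree (Hall i)).
Qed.

Lemma closed2_and (A B : rel2) :
  closed2 A -> closed2 B -> closed2 (fun x y => A x y /\ B x y).
Proof.
  intros HA HB x y Hxy.
  destruct (classic (A x y)) as [Ha | Ha].
  - destruct (HB x y (fun Hb => Hxy (conj Ha Hb))) as [m Hm].
    exists m. intros x' y' Hagree [_ Hb]. exact (Hm x' y' Hagree Hb).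
  - destruct (HA x y Ha) as [m Hm].
    exists m. intros x' y' Hagree [Ha' _]. exact (Hm x' y' Hagree Ha').
Qed.

Lemma Sigma02_closed_or (C A : rel2) :
  closed2 C -> Sigma02 A -> Sigma02 (fun x y => C x y \/ A x y).
Proof.
  intros HC [F [HF HA]].
  exists (fun i => match i with 0 => C | S i => F i end). split.
  - intros [|i]; [exact HC | exact (HF i)].
  - intros x y. rewrite HA. split.
    + intros [Hc | [i Hi]]; [exists 0 | exists (S i)]; assumption.
    + intros [[|i] Hi]; [left | right; exists i]; assumption.
Qed.

Definition agree_from (m : nat) (x y : cantor) : Prop :=
  forall n, m <= n -> x n = y n.

Lemma agree_from_closed m : closed2 (agree_from m).
Proof.
  apply (closed2_forall (fun n x y => m <= n -> x n = y n)).
  intros n. apply (depends_below_closed (S n)).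
  intros x y x' y' Hagree Hxy Hn.
  destruct (Hagree n) as [-> ->]; [lia | exact (Hxy Hn)].
Qed.

Global Instance E0_refl : Reflexive E0.
Proof. intros x. exists 0. reflexivity. Qed.

Global Instance E0_trans : Transitive E0.
Proof.
  intros x y z [m1 H1] [m2 H2]. exists (m1 + m2). intros n Hn.
  rewrite H1 by lia. apply H2. lia.
Qed.

Definition double_diff (x y : cantor) (t : nat) : Prop :=
  x t <> y t /\ x (S t) <> y (S t).

Definition first_double_diff (x y : cantor) (t : nat) : Prop :=
  double_diff x y t /\ forall s, s < t -> ~ double_diff x y s.

Definition E0_graph : rel2 := fun x y =>
  exists t, first_double_diff x y t /\ agree_from (S (S t)) x y.

Lemma double_diff_depends_below t : depends_below (S (S t)) (fun x y => double_diff x y t).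
Proof.
  intros x y x' y' Hagree. unfold double_diff.
  destruct (Hagree t) as [-> ->]; [lia |].
  destruct (Hagree (S t)) as [-> ->]; [lia |]. trivial.
Qed.

Lemma first_double_diff_depends_below t :
  depends_below (S (S t)) (fun x y => first_double_diff x y t).
Proof.
  intros x y x' y' Hagree [Hd Hmin]. split.
  - exact (double_diff_depends_below t x y x' y' Hagree Hd).
  - intros s Hs Hd'. apply (Hmin s Hs).
    apply (double_diff_depends_below s x' y' x y); [| exact Hd'].
    intros n Hn. destruct (Hagree n) as [-> ->]; [lia | split; reflexivity].
Qed.

Lemma first_double_diff_unique x y t t' :
  first_double_diff x y t -> first_double_diff x y t' -> t = t'.
Proof.
  intros [Hd Hmin] [Hd' Hmin'].
  destruct (Nat.lt_total t t') as [Hlt | [Heq | Hlt]]; [| exact Heq |].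
  - destruct (Hmin' t Hlt Hd).
  - destruct (Hmin t' Hlt Hd').
Qed.

Lemma first_double_diff_exists x y s :
  double_diff x y s -> exists t, first_double_diff x y t.
Proof.
  induction s as [s IH] using lt_wf_ind. intros Hs.
  destruct (classic (exists s', s' < s /\ double_diff x y s')) as [[s' [Hlt Hs']] | Hnone].
  - exact (IH s' Hlt Hs').
  - exists s. split; [exact Hs |]. intros s' Hlt Hs'. apply Hnone. eauto.
Qed.

Lemma E0_graph_irrefl x : ~ E0_graph x x.
Proof. intros [t [[[Hd _] _] _]]. apply Hd. reflexivity. Qed.

Lemma E0_graph_sym x y : E0_graph x y -> E0_graph y x.
Proof.
  unfold E0_graph, first_double_diff, double_diff, agree_from.
  intros [t [[[Hd1 Hd2] Hmin] Hagree]]. exists t. repeat split.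
  - intros H. apply Hd1. symmetry. exact H.
  - intros H. apply Hd2. symmetry. exact H.
  - intros s Hs [H1 H2]. apply (Hmin s Hs). split; intros H; [apply H1 | apply H2]; symmetry; exact H.
  - intros n Hn. symmetry. exact (Hagree n Hn).
Qed.

Lemma E0_graph_sub_E0 x y : E0_graph x y -> E0 x y.
Proof. intros [t [_ Hagree]]. exists (S (S t)). exact Hagree. Qed.

Lemma Sigma02_E0_graph : Sigma02 E0_graph.
Proof.
  exists (fun t x y => first_double_diff x y t /\ agree_from (S (S t)) x y). split.
  - intros t. apply closed2_and; [| apply agree_from_closed].
    exact (depends_below_closed _ _ (first_double_diff_depends_below t)).
  - intros x y. reflexivity.
Qed.

Lemma not_E0_graph_iff x y :
  ~ E0_graph x y <->
  (forall t, ~ double_diff x y t) \/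
  exists d t, S t < d /\ first_double_diff x y t /\ x d <> y d.
Proof.
  split.
  - intros Hnot.
    destruct (classic (exists s, double_diff x y s)) as [[s Hs] | Hnone];
      [| left; intros t Ht; apply Hnone; exists t; exact Ht].
    destruct (first_double_diff_exists x y s Hs) as [t Ht]. right.
    apply NNPP. intros Hlate. apply Hnot. exists t. split; [exact Ht |].
    intros n Hn. apply NNPP. intros Hxy. apply Hlate. exists n, t. auto.
  - intros [Hnone | [d [t' [Hlt [Ht' Hd]]]]] [t [Ht Hagree]].
    + exact (Hnone t (proj1 Ht)).
    + rewrite (first_double_diff_unique x y t t' Ht Ht') in Hagree.
      exact (Hd (Hagree d Hlt)).
Qed.

Lemma Pi02_E0_graph : Pi02 E0_graph.
Proof.
  destruct (Sigma02_closed_or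
              (fun x y => forall t, ~ double_diff x y t)
              (fun x y => exists d t, S t < d /\ first_double_diff x y t /\ x d <> y d))
    as [F [HF HFiff]].
  - apply (closed2_forall (fun t x y => ~ double_diff x y t)). intros t.
    apply (depends_below_closed (S (S t))). intros x y x' y' Hagree Hnd Hd'.
    apply Hnd. apply (double_diff_depends_below t x' y' x y); [| exact Hd'].
    intros n Hn. destruct (Hagree n) as [-> ->]; [exact Hn | split; reflexivity].
  - exists (fun d x y => exists t, S t < d /\ first_double_diff x y t /\ x d <> y d).
    split; [| reflexivity].
    intros d. apply (depends_below_closed (S d)).
    intros x y x' y' Hagree [t [Hlt [Ht Hd]]]. exists t. split; [exact Hlt |]. split.
    + apply (first_double_diff_depends_below t x y); [| exact Ht].
      intros n Hn. apply Hagree. lia.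
    + destruct (Hagree d) as [-> ->]; [lia | exact Hd].
  - exists F. split; [exact HF |]. intros x y. rewrite not_E0_graph_iff. apply HFiff.
Qed.

Lemma E0_graph_of_parity_diff x z K b :
  x K <> z K -> x (S K) <> z (S K) ->
  (forall i, i <> K -> i <> S K -> x i <> z i -> S i < K /\ Nat.odd i = b) ->
  E0_graph x z.
Proof.
  intros HK HSK Hsparse. exists K. split; [split; [split; assumption |] |].
  - intros s Hs [Hd1 Hd2].
    destruct (Hsparse s) as [_ Hodd]; [lia | lia | exact Hd1 |].
    destruct (Nat.eq_dec (S s) K) as [Heq | Hne].
    + destruct (Hsparse s) as [Hlt _]; [lia | lia | exact Hd1 | lia].
    + destruct (Hsparse (S s)) as [_ Hodd']; [exact Hne | lia | exact Hd2 |].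
      rewrite Nat.odd_succ, <- Nat.negb_odd, Hodd in Hodd'. destruct b; discriminate.
  - intros n Hn. apply NNPP. intros Hxz.
    destruct (Hsparse n) as [Hlt _]; [lia | lia | exact Hxz | lia].
Qed.

Lemma E0_walk2 x y : E0 x y -> walk E0_graph 2 x y.
Proof.
  intros [m Hagree].
  set (K := S m).
  set (z := fun i => if (i =? K) || (i =? S K) then negb (x i)
                     else if Nat.even i then y i else x i).
  assert (Hflip : forall i, i = K \/ i = S K -> z i = negb (x i)).
  { intros i [-> | ->]; unfold z; rewrite ?Nat.eqb_refl, ?orb_true_r; reflexivity. }
  assert (Hmix : forall i, i <> K -> i <> S K ->
            z i = if Nat.even i then y i else x i).
  { intros i HK HSK. unfold z.
    apply Nat.eqb_neq in HK, HSK. rewrite HK, HSK. reflexivity. }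
  assert (Hnegb : forall b, b <> negb b) by (intros []; discriminate).
  exists z. split; [| exists y; split; [| reflexivity]].
  - apply (E0_graph_of_parity_diff x z K false);
      [rewrite Hflip by auto; apply Hnegb .. |].
    intros i HK HSK Hxz. rewrite Hmix in Hxz by assumption.
    rewrite <- Nat.negb_odd in Hxz. destruct (Nat.odd i); [easy |].
    split; [| reflexivity].
    destruct (Nat.lt_ge_cases i m) as [Hlt | Hge]; [unfold K; lia |].
    destruct (Hxz (Hagree i Hge)).
  - apply E0_graph_sym.
    apply (E0_graph_of_parity_diff y z K true);
      [rewrite Hflip, Hagree by (unfold K; lia); apply Hnegb .. |].
    intros i HK HSK Hyz. rewrite Hmix in Hyz by assumption.
    rewrite <- Nat.negb_odd in Hyz. destruct (Nat.odd i); [| easy].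
    split; [| reflexivity].
    destruct (Nat.lt_ge_cases i m) as [Hlt | Hge]; [unfold K; lia |].
    destruct (Hyz (eq_sym (Hagree i Hge))).
Qed.

Lemma E0_graph_single_diff_not_walk1 :
  ~ walk E0_graph 1 (fun _ => false) (fun n => n =? 0).
Proof.
  intros [z [[t [[[_ Hd] _] _]] ->]]. apply Hd. reflexivity.
Qed.

Theorem proposition3p7 : Delta02_graphable_diam E0 2.
Proof.
  exists E0_graph.
  split; [split; [exact E0_graph_irrefl | exact E0_graph_sym] |].
  split; [split; [exact Sigma02_E0_graph | exact Pi02_E0_graph] |].
  pose proof (connected_iff_equiv E0_graph E0 _ _ E0_graph_sub_E0 E0_walk2) as Hconn.
  split; [exact Hconn |].
  apply (has_diameter_intro _ 2 (fun _ => false) (fun n => n =? 0)).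
  - exact (diam_bound_equiv E0_graph E0 _ _ E0_graph_sub_E0 E0_walk2).
  - apply Hconn. exists 1. intros [|n] Hn; [lia | reflexivity].
  - intros [|[|j]] Hj; [| exact E0_graph_single_diff_not_walk1 | lia].
    intros Heq. discriminate (f_equal (fun f => f 0) Heq).
Qed.
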